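(* For integers $k,\ell,r,n$ with $0 \leq k-r \leq k \leq \ell \leq \ell+r \leq n$, the polynomial \[ \overline{ { n \brack k}}_{q,t} \overline{ { n \brack \ell}}_{q,t} - \overline{ { n \brack k-r}}_{q,t} \overline{ { n \brack \ell+r}}_{q,t} \] has non-negative coefficients as a polynomial in $t$ and $q$.
   Context: An overpartition is a partition in which the last occurrence of each distinct part size may be overlined; its weight $|\lambda|$ is the sum of its parts. For integers $0\le b\le a$, $\overline{{a \brack b}}_{q,t}=\sum_{\lambda} t^{\#_o(\lambda)} q^{|\lambda|}$, the sum over all overpartitions $\lambda$ with largest part at most $a-b$ and at most $b$ parts, $\#_o(\lambda)$ being the number of overlined parts. *)

From HB Require Import structures.
From mathcomp Require Import all_boot all_order all_algebra.
Set Implicit Arguments. Unset Strict Implicit. Unset Printing Implicit Defensive.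
Import GRing.Theory Num.Theory.
Local Open Scope ring_scope.

(* An overpartition with largest part <= m and at most b parts is encoded by
   its multiplicity data: for each part size s = i.+1 (i : 'I_m), the pair
   (multiplicity of s, whether the last occurrence of s is overlined). *)
Definition ovp_data (m b : nat) := {ffun 'I_m -> 'I_b.+1 * bool}.

Definition ovp_ok (m b : nat) (f : ovp_data m b) : bool :=
  ((\sum_(i < m) (f i).1 <= b)%N) && [forall i, (f i).2 ==> (0 < (f i).1)%N].

Definition ovp_weight (m b : nat) (f : ovp_data m b) : nat :=
  (\sum_(i < m) i.+1 * (f i).1)%N.

Definition ovp_novl (m b : nat) (f : ovp_data m b) : nat :=
  #|[pred i | (f i).2]|.

(* overline{[a, b]}_{q,t} as a polynomial in t (outer variable) whose
   coefficients are integer polynomials in q (inner variable), for b <= a. *)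
Definition ovgauss (a b : nat) : {poly {poly int}} :=
  \sum_(f : ovp_data (a - b) b | ovp_ok f)
     (('X^(ovp_weight f) : {poly int})%:P * 'X^(ovp_novl f)).

Definition nonneg_coefs (P : {poly {poly int}}) : Prop :=
  forall i j : nat, 0 <= (P`_i)`_j.

From mathcomp Require Import all_boot all_order all_algebra.
From mathcomp Require Import ring zify.
Set Implicit Arguments. Unset Strict Implicit. Unset Printing Implicit Defensive.
Import GRing.Theory Num.Theory.
Local Open Scope ring_scope.

(* Write the overpartition Gaussian polynomial [[a, b]] as B(a - b, b), where B(m, s) is the
   generating function of overpartitions with parts at most m and at most s parts.  Sorting by
   the multiplicity of the part m gives
     B(m+1, s+1) = B(m, s+1) + q^(m+1) B(m+1, s) + t q^(m+1) B(m, s),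
   and the identity
     (1 - q^(s+1)) B(m, s+1) - (1 - q^(m+1)) B(m+1, s) + t (q^(m+1) - q^(s+1)) B(m, s) = 0
   yields the conjugate recurrence and the symmetry B(m, s) = B(s, m).
   Every  B(a, b+1) B(c+1, d) - q^j B(a+1, b) B(c, d+1)  with c <= a, b <= d and
   j <= (a - c) + (d - b) then has nonnegative coefficients: one of the two recurrences writes it
   as D + q^i D' + t q^i D'' with D, D', D'' of the same shape and smaller a + b + c + d, and the
   symmetry reduces the case b = d to b < d.  For j = 0 this is the step
   [[n, k+1]] [[n, l]] - [[n, k]] [[n, l+1]] >= 0 for k <= l, and the theorem telescopes these
   steps. *)

Local Notation qtpoly := {poly {poly int}}.
Local Notation q := (('X : {poly int})%:P : qtpoly).
Local Notation t := ('X : qtpoly).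

(* The inner predicate must be [polyOver_pred], not [polyOver]: only then are the closure
   instances of the outer [polyOver] (hence [rpredD], [rpredM], ...) found. *)
Local Notation nneg_poly := (polyOver_pred (@Num.Def.nneg_num_pred int)).
Local Notation nneg_qtpoly := (polyOver nneg_poly).

Lemma nonneg_coefsP (P : qtpoly) : nonneg_coefs P <-> P \in nneg_qtpoly.
Proof.
split=> [P_ge0 | /polyOverP P_ge0 i j]; last by have /polyOverP := P_ge0 i; apply.
by apply/polyOverP=> i; apply/polyOverP=> j; apply: P_ge0.
Qed.

Lemma q_nneg : q \in nneg_qtpoly.
Proof. by rewrite polyOverC polyOverX. Qed.

Lemma t_nneg : t \in nneg_qtpoly.
Proof. exact: polyOverX. Qed.

Lemma qt_comb_nneg k (x y z : qtpoly) :
    x \in nneg_qtpoly -> y \in nneg_qtpoly -> z \in nneg_qtpoly ->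
  x + q ^+ k * y + t * q ^+ k * z \in nneg_qtpoly.
Proof. by move=> *; rewrite !(rpredD, rpredM, rpredX, q_nneg, t_nneg). Qed.

(* [ovbox m s] is B(m, s): [c] is the multiplicity of the part [m], whose last copy may be
   overlined when [c > 0]. *)
Definition part_weight m c : qtpoly := (1 + t *+ (0 < c)) * q ^+ (m * c).

Lemma part_weight0 m : part_weight m 0 = 1.
Proof. by rewrite /part_weight muln0 addr0 mulr1. Qed.

Fixpoint ovbox (m s : nat) : qtpoly :=
  if m is m'.+1 then \sum_(c < s.+1) part_weight m c * ovbox m' (s - c) else 1.

Lemma ovbox0s s : ovbox 0 s = 1. Proof. by []. Qed.

Lemma ovboxm0 m : ovbox m 0 = 1.
Proof.
by elim: m => //= m IHm; rewrite big_ord1 part_weight0 mul1r IHm.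
Qed.

Lemma ovbox_nneg m s : ovbox m s \in nneg_qtpoly.
Proof.
elim: m s => [|m IHm] s /=; first exact: rpred1.
apply: rpred_sum => c _.
by rewrite !(rpredM, rpredD, rpredX, rpredMn, rpred1, q_nneg, t_nneg).
Qed.

Lemma part_weightS m c :
  part_weight m c.+1 = q ^+ m * part_weight m c + (c == 0)%:R * t * q ^+ m.
Proof.
rewrite /part_weight; case: c => [|c] /=; rewrite ?muln0 ?muln1 ?(mulnS m c.+1) ?exprD.
all: ring.
Qed.

Lemma ovboxSS m s :
  ovbox m.+1 s.+1 = ovbox m s.+1 + q ^+ m.+1 * ovbox m.+1 s + t * q ^+ m.+1 * ovbox m s.
Proof.
rewrite [LHS]/= big_ord_recl part_weight0 subn0 mul1r -addrA.
congr (_ + _); under eq_bigr => c _ do rewrite lift0 subSS part_weightS mulrDl.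
rewrite big_split /= mulr_sumr; congr (_ + _); first by apply: eq_bigr => c _; ring.
by rewrite big_ord_recl /= subn0 big1 ?addr0 ?mul1r // => c _; rewrite !mul0r.
Qed.

Definition ovbox_defect m b : qtpoly :=
  (1 - q ^+ b.+1) * ovbox m b.+1 - (1 - q ^+ m.+1) * ovbox m.+1 b
  + t * (q ^+ m.+1 - q ^+ b.+1) * ovbox m b.

Lemma ovbox_defect_eq0 m b : ovbox_defect m b = 0.
Proof.
have defect00 : ovbox_defect 0 0 = 0 by rewrite /ovbox_defect !ovboxm0; ring.
have defect0S b' : ovbox_defect 0 b'.+1 = q * ovbox_defect 0 b'.
  by rewrite /ovbox_defect ovboxSS !ovbox0s !exprS; ring.
have defectS0 m' : ovbox_defect m'.+1 0 = ovbox_defect m' 0.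
  by rewrite /ovbox_defect ovboxSS !ovboxm0 !exprS; ring.
have defectSS m' b' : ovbox_defect m'.+1 b'.+1 = ovbox_defect m' b'.+1
    + q ^+ m'.+2 * ovbox_defect m'.+1 b' + t * q ^+ m'.+2 * ovbox_defect m' b'.
  by rewrite /ovbox_defect (ovboxSS m' b'.+1) (ovboxSS m'.+1 b') (ovboxSS m' b') !exprS; ring.
elim: m b => [|m IHm] b.
  by elim: b => [|b IHb]; rewrite ?defect0S ?IHb ?mulr0.
elim: b => [|b IHb]; first by rewrite defectS0.
by rewrite defectSS IHb !IHm !mulr0 !addr0.
Qed.

Lemma ovboxSS' m b :
  ovbox m.+1 b.+1 = ovbox m.+1 b + q ^+ b.+1 * ovbox m b.+1 + t * q ^+ b.+1 * ovbox m b.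
Proof.
apply/eqP; rewrite -subr_eq0 -(ovbox_defect_eq0 m b) ovboxSS /ovbox_defect; apply/eqP; ring.
Qed.

Lemma ovboxC m b : ovbox m b = ovbox b m.
Proof.
elim: m b => [|m IHm] b; first by rewrite ovboxm0.
elim: b => [|b IHb]; first by rewrite ovboxm0.
by rewrite ovboxSS ovboxSS' (IHm b.+1) (IHm b) IHb.
Qed.

(* The slack [q ^+ j] lets the induction close: expanding by either recurrence moves powers of
   [q] between the two products and so changes [j]. *)
Definition ovbox_cross a b c d j : qtpoly :=
  ovbox a b.+1 * ovbox c.+1 d - q ^+ j * ovbox a.+1 b * ovbox c d.+1.

Lemma ovbox_crossC a b c d j : ovbox_cross a b c d j = ovbox_cross d c b a j.
Proof.
by rewrite /ovbox_cross (ovboxC a) (ovboxC c.+1) (ovboxC a.+1) (ovboxC c); ring.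
Qed.

Lemma ovbox_cross_diag a b : ovbox_cross a b a b 0 = 0.
Proof. by rewrite /ovbox_cross expr0 mul1r [X in _ - X]mulrC subrr. Qed.

Lemma ovbox_cross0SS a b d j : ovbox_cross a b 0 d.+1 j.+1
  = ovbox a b.+1 + q ^+ 1 * ovbox_cross a b 0 d j + t * q ^+ 1 * ovbox a b.+1.
Proof. by rewrite /ovbox_cross ovboxSS !ovbox0s !exprS; ring. Qed.

Lemma ovbox_crossSSS a b c d j : ovbox_cross a b c.+1 d.+1 j.+1
  = ovbox_cross a b c d.+1 j.+1 + q ^+ c.+2 * ovbox_cross a b c.+1 d j
    + t * q ^+ c.+2 * ovbox_cross a b c d j.
Proof. by rewrite /ovbox_cross (ovboxSS c.+1 d) (ovboxSS c d.+1) !exprS; ring. Qed.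

Lemma ovbox_cross0S0 a b d : ovbox_cross a b 0 d.+1 0
  = ovbox_cross a b 0 d 0 + q ^+ d.+1 * ovbox a b.+1 + t * q ^+ d.+1 * ovbox a b.+1.
Proof. by rewrite /ovbox_cross ovboxSS' !ovbox0s; ring. Qed.

Lemma ovbox_crossSS0 a b c d : ovbox_cross a b c.+1 d.+1 0
  = ovbox_cross a b c.+1 d 0 + q ^+ d.+1 * ovbox_cross a b c d.+1 1
    + t * q ^+ d.+1 * ovbox_cross a b c d 1.
Proof. by rewrite /ovbox_cross (ovboxSS' c.+1 d) (ovboxSS' c d.+1) !exprS; ring. Qed.

Section CrossInduction.

Variable n : nat.
Hypothesis IHn : forall a b c d j, (a + b + c + d < n)%N ->
  (c <= a)%N -> (b <= d)%N -> (j <= a - c + (d - b))%N ->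
  ovbox_cross a b c d j \in nneg_qtpoly.

Lemma ovbox_cross_nneg_lt a b c d j : (a + b + c + d <= n)%N ->
  (c <= a)%N -> (b < d)%N -> (j <= a - c + (d - b))%N ->
  ovbox_cross a b c d j \in nneg_qtpoly.
Proof.
case: d => [//|d] size ca bd jle.
case: j jle => [|j] jle; case: c ca size jle => [|c] ca size jle.
- by rewrite ovbox_cross0S0 qt_comb_nneg ?ovbox_nneg //; apply: IHn; lia.
- by rewrite ovbox_crossSS0 qt_comb_nneg //; apply: IHn; lia.
- by rewrite ovbox_cross0SS qt_comb_nneg ?ovbox_nneg //; apply: IHn; lia.
- by rewrite ovbox_crossSSS qt_comb_nneg //; apply: IHn; lia.
Qed.

End CrossInduction.

Lemma ovbox_cross_nneg a b c d j :
  (c <= a)%N -> (b <= d)%N -> (j <= a - c + (d - b))%N ->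
  ovbox_cross a b c d j \in nneg_qtpoly.
Proof.
have [n size] : exists n, (a + b + c + d < n)%N by exists (a + b + c + d).+1.
elim: n a b c d j size => [//|n IHn] a b c d j size ca bd jle.
have [lt_bd | le_db] := ltnP b d; first by apply: (ovbox_cross_nneg_lt IHn).
have eq_db : d = b by lia.
have [lt_ca | le_ac] := ltnP c a.
  by rewrite ovbox_crossC; apply: (ovbox_cross_nneg_lt IHn); lia.
have [-> ->] : c = a /\ j = 0%N by lia.
by rewrite eq_db ovbox_cross_diag rpred0.
Qed.

Section OverpartitionsInBox.

Variable M : nat.
Local Notation part_data := ('I_M.+1 * bool)%type.

Definition ovp_fits m s (f : ovp_data m M) : bool :=
  ((\sum_(i < m) (f i).1 <= s)%N) && [forall i, (f i).2 ==> (0 < (f i).1)%N].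

Definition ovp_term m (f : ovp_data m M) : qtpoly :=
  ('X^(ovp_weight f) : {poly int})%:P * 'X^(ovp_novl f).

Definition ovp_gf m s : qtpoly := \sum_(f : ovp_data m M | ovp_fits s f) ovp_term f.

Definition ovp_ext m (x : part_data) (g : ovp_data m M) : ovp_data m.+1 M :=
  [ffun i => if unlift ord_max i is Some j then g j else x].

Lemma ovp_ext_max m x (g : ovp_data m M) : ovp_ext x g ord_max = x.
Proof. by rewrite ffunE unlift_none. Qed.

Lemma ovp_ext_lift m x (g : ovp_data m M) j : ovp_ext x g (lift ord_max j) = g j.
Proof. by rewrite ffunE liftK. Qed.

Lemma ovp_ext_bij m : bijective (fun p : part_data * ovp_data m M => ovp_ext p.1 p.2).
Proof.
pose split (f : ovp_data m.+1 M) : part_data * ovp_data m M :=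
  (f ord_max, [ffun j => f (lift ord_max j)]).
exists split => [[x g] | f]; rewrite /split /=.
  by rewrite ovp_ext_max; congr (_, _); apply/ffunP => j; rewrite ffunE ovp_ext_lift.
by apply/ffunP => i; rewrite ffunE; case: (unliftP ord_max i) => [j ->|->]; rewrite ?ffunE.
Qed.

Lemma ovp_fits_ext m s x (g : ovp_data m M) :
  ovp_fits s (ovp_ext x g) = [&& (x.1 <= s)%N, x.2 ==> (0 < x.1)%N & ovp_fits (s - x.1) g].
Proof.
rewrite /ovp_fits (bigD1_ord ord_max) // ovp_ext_max.
under eq_bigr => i _ do rewrite ovp_ext_lift.
have -> : [forall i, (ovp_ext x g i).2 ==> (0 < (ovp_ext x g i).1)%N] =
          (x.2 ==> (0 < x.1)%N) && [forall i, (g i).2 ==> (0 < (g i).1)%N].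
  apply/forallP/andP => [fit | [fit_x /forallP fit_g] i].
    split; first by have := fit ord_max; rewrite ovp_ext_max.
    by apply/forallP => j; have := fit (lift ord_max j); rewrite ovp_ext_lift.
  by case: (unliftP ord_max i) => [j ->|->]; rewrite ?ovp_ext_lift ?ovp_ext_max.
case: (leqP x.1 s) => [le_xs | lt_sx] /=; last by rewrite ltn_geF // ltn_addr.
by rewrite -leq_subRL // andbCA.
Qed.

Lemma ovp_term_ext m x (g : ovp_data m M) :
  ovp_term (ovp_ext x g) = q ^+ (m.+1 * x.1) * t ^+ x.2 * ovp_term g.
Proof.
have novl_ext : ovp_novl (ovp_ext x g) = (x.2 + ovp_novl g)%N.
  rewrite /ovp_novl -!sum1_card big_mkcond [in RHS]big_mkcond (bigD1_ord ord_max) //=.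
  rewrite inE ovp_ext_max.
  by congr (_ + _)%N; apply: eq_bigr => i _; rewrite !inE ovp_ext_lift.
rewrite /ovp_term novl_ext /ovp_weight (bigD1_ord ord_max) // ovp_ext_max.
under eq_bigr => i _ do rewrite ovp_ext_lift lift_max.
by rewrite addnC !exprD !rmorphM !rmorphXn; ring.
Qed.

Lemma ovp_gf0 s : ovp_gf 0 s = 1.
Proof.
rewrite /ovp_gf (big_pred1 [ffun=> (ord0, false)]) => [|f]; last first.
  have -> : f = [ffun=> (ord0, false)] by apply/ffunP => -[].
  by rewrite /ovp_fits big_ord0 /= eqxx; apply/forallP => -[].
by rewrite /ovp_term /ovp_weight /ovp_novl big_ord0 eq_card0 ?mul1r //; case.
Qed.

Lemma ovp_gfS m s : (s <= M)%N ->
  ovp_gf m.+1 s = \sum_(c < s.+1) part_weight m.+1 c * ovp_gf m (s - c).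
Proof.
move=> le_sM; rewrite /ovp_gf (reindex _ (onW_bij _ (ovp_ext_bij m))) /=.
transitivity (\sum_(x : part_data)
    \sum_(g : ovp_data m M | ovp_fits s (ovp_ext x g)) ovp_term (ovp_ext x g)).
  by rewrite pair_big_dep.
transitivity (\sum_(c < M.+1) \sum_(o : bool) if (c <= s)%N && (o ==> (0 < c)%N)
    then q ^+ (m.+1 * c) * t ^+ o * ovp_gf m (s - c) else 0).
  rewrite [RHS]pair_bigA; apply: eq_bigr => -[c o] _ /=.
  under eq_bigl => g do rewrite ovp_fits_ext.
  under eq_bigr do rewrite ovp_term_ext.
  by case: (c <= s)%N; case: (o ==> _); rewrite /= ?big_pred0_eq // -mulr_sumr.
rewrite (big_ord_widen _ (fun c => part_weight m.+1 c * ovp_gf m (s - c))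
                       (le_sM : (s < M.+1)%N)).
rewrite [RHS]big_mkcond /=; apply: eq_bigr => c _.
rewrite big_bool /= ltnS /part_weight; case: (c <= s)%N; rewrite /= ?addr0 //.
by case: (0 < c)%N; rewrite /= ?add0r; ring.
Qed.

Lemma ovp_gf_ovbox m s : (s <= M)%N -> ovp_gf m s = ovbox m s.
Proof.
elim: m s => [|m IHm] s le_sM; first exact: ovp_gf0.
by rewrite ovp_gfS //=; apply: eq_bigr => c _; rewrite IHm ?(leq_trans (leq_subr c s)).
Qed.

End OverpartitionsInBox.

Lemma ovgauss_ovbox a b : ovgauss a b = ovbox (a - b) b.
Proof. exact: ovp_gf_ovbox. Qed.

Lemma ovgauss_step_nneg n k l : (k <= l)%N -> (l < n)%N ->
  ovgauss n k.+1 * ovgauss n l - ovgauss n k * ovgauss n l.+1 \in nneg_qtpoly.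
Proof.
move=> le_kl lt_ln; rewrite !ovgauss_ovbox.
have -> : (n - k = (n - k.+1).+1)%N by lia.
have -> : (n - l = (n - l.+1).+1)%N by lia.
have := @ovbox_cross_nneg (n - k.+1) k (n - l.+1) l 0.
by rewrite /ovbox_cross expr0 mul1r; apply; lia.
Qed.

Theorem corollary6p7 (k l r n : nat) :
  (r <= k)%N -> (k <= l)%N -> (l + r <= n)%N ->
  nonneg_coefs (ovgauss n k * ovgauss n l - ovgauss n (k - r) * ovgauss n (l + r)).
Proof.
move=> le_rk le_kl le_lrn; apply/nonneg_coefsP.
elim: r le_rk le_lrn => [|r IHr] le_rk le_lrn; first by rewrite subn0 addn0 subrr rpred0.
have prev : ovgauss n k * ovgauss n l - ovgauss n (k - r) * ovgauss n (l + r) \in nneg_qtpoly.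
  by apply: IHr; lia.
have step : ovgauss n (k - r) * ovgauss n (l + r)
    - ovgauss n (k - r.+1) * ovgauss n (l + r.+1) \in nneg_qtpoly.
  have -> : (k - r = (k - r.+1).+1)%N by lia.
  by rewrite addnS; apply: ovgauss_step_nneg; lia.
by have := rpredD prev step; rewrite addrA subrK.
Qed.
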